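(* Let $\eta>0$ and consider the network (NonAut-I-$\eta$) with species $\Lambda_1,\Lambda_2$ and reactions \[ 1:\ \eta\Lambda_1+\Lambda_2\to\emptyset,\qquad 2:\ \eta\Lambda_2+\Lambda_1\to\emptyset,\qquad \emptyset\to\Lambda_1,\qquad \emptyset\to\Lambda_2 \] (the last two being constant productions), with the associated ODEs \[ \begin{cases} [\dot\Lambda_1]=P_{\Lambda_1}-\eta\, r_1([\Lambda_1],[\Lambda_2])-r_2([\Lambda_2],[\Lambda_1]),\\ [\dot\Lambda_2]=P_{\Lambda_2}-r_1([\Lambda_1],[\Lambda_2])-\eta\, r_2([\Lambda_2],[\Lambda_1]), \end{cases} \] where $r_1,r_2$ are monotone chemical functions, under the kinetic symmetry constraints $r_1\equiv r_2\equiv r$ (as functions of their ordered arguments) and $P_{\Lambda_1}=P_{\Lambda_2}=P>0$. If $\eta\neq1$, the system has the capacity for zero-eigenvalue bifurcation and thus for differentiation, with bifurcation condition $\partial_1 r=\partial_2 r$ (partial derivatives of $r$ with respect to its first and second argument, evaluated at a homogeneous steady state $[\Lambda_1]=[\Lambda_2]$). The instability motif associated to a non-autocatalytic unstable-positive feedback which generates the necessary instability is the subnetwork with species $\{\Lambda_1,\Lambda_2\}$ and reactions $\{1:\ \eta\Lambda_1+\Lambda_2\to\dots,\ 2:\ \eta\Lambda_2+\Lambda_1\to\dots\}$.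
   Context: A rate function is monotone chemical if it is nonnegative, positive exactly when all its reactant concentrations are positive, independent of non-reactant concentrations, and has positive partial derivative in each reactant concentration at positive concentrations; kinetics are parameter-rich, so the partial derivatives at a positive steady state may be prescribed as arbitrary positive numbers. Capacity for zero-eigenvalue bifurcation means there are such admissible values at a homogeneous positive steady state for which the Jacobian is singular. For a network with stoichiometric matrix $S_{mj}$ (net production of species $m$ in reaction $j$), a $k$-Child-Selection triple consists of $k$ species $\kappa$, $k$ reactions $E_\kappa$ and a bijection $J:\kappa\to E_\kappa$ such that each species in $\kappa$ is a reactant of its assigned reaction; its CS-matrix is $S[\kappa]_{ml}=S_{m,J(X_l)}$. An unstable-positive feedback is a $k\times k$ CS-matrix with $\operatorname{sign}\det=(-1)^{k-1}$ and no proper principal $k'\times k'$ submatrix with determinant of sign $(-1)^{k'-1}$; it is non-autocatalytic if it is not Metzler (some off-diagonal entry negative). Its instability motif is the subnetwork consisting of the species $\kappa$ and reactions $E_\kappa$, disregarding other species. *)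

From HB Require Import structures.
From mathcomp Require Import all_boot all_order all_algebra.
Set Implicit Arguments.
Unset Strict Implicit.
Unset Printing Implicit Defensive.
Import Order.TTheory GRing.Theory Num.Theory.
Local Open Scope ring_scope.

Section General.
Variable R : realFieldType.

(** A reaction network with [n] species and [m] reactions is given by its
    stoichiometric matrix [S] ([S i j] = net production of species [i] in
    reaction [j]) and its reactant relation [reac i j] (species [i] is a
    reactant of reaction [j]). *)

Definition CS_triple n m (reac : 'I_n -> 'I_m -> bool) k
    (kappa : 'I_k -> 'I_n) (J : 'I_k -> 'I_m) : Prop :=
  [/\ injective kappa, injective J & forall l, reac (kappa l) (J l)].

Definition CS_matrix n m (S : 'M[R]_(n, m)) k
    (kappa : 'I_k -> 'I_n) (J : 'I_k -> 'I_m) : 'M[R]_k :=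
  \matrix_(l, l') S (kappa l) (J l').

Definition principal_minor k (M : 'M[R]_k) (A : {set 'I_k}) : R :=
  \det (\matrix_(i < #|A|, j < #|A|) M (enum_val i) (enum_val j)).

Definition unstable_positive k (M : 'M[R]_k) : Prop :=
  0 < (-1) ^+ k.-1 * \det M /\
  forall A : {set 'I_k}, (0 < #|A|)%N -> (#|A| < k)%N ->
    ~ (0 < (-1) ^+ (#|A|).-1 * principal_minor M A).

Definition non_autocatalytic k (M : 'M[R]_k) : Prop :=
  exists l l' : 'I_k, l != l' /\ M l l' < 0.

Definition motif_species n m k (kappa : 'I_k -> 'I_n) (J : 'I_k -> 'I_m)
  : {set 'I_n} := [set kappa l | l in 'I_k].
Definition motif_reactions n m k (kappa : 'I_k -> 'I_n) (J : 'I_k -> 'I_m)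
  : {set 'I_m} := [set J l | l in 'I_k].

(** The network NonAut-I-eta. Species: 0 = Lambda_1, 1 = Lambda_2.
    Reactions: 0 = (1: eta L1 + L2 -> 0), 1 = (2: eta L2 + L1 -> 0),
               2 = (0 -> L1), 3 = (0 -> L2). *)
Definition nonautI_S (eta : R) : 'M[R]_(2, 4) :=
  \matrix_(i < 2, j < 4)
    match val i, val j with
    | 0, 0 => - eta | 0, 1 => -1 | 0, 2 => 1
    | 1, 0 => -1 | 1, 1 => - eta | 1, 3 => 1
    | _, _ => 0
    end.

Definition nonautI_reac (i : 'I_2) (j : 'I_4) : bool := (val j < 2)%N.

(** Admissible values at a homogeneous positive steady state under the
    kinetic symmetry r1 = r2 = r, P_{L1} = P_{L2} = P:
    rate values v = (rho, rho, P, P) with rho = r(x,x) > 0, and reactivity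
    matrix Rm_{j,i} = d r_j / d [Lambda_i], with a = d_1 r(x,x) > 0,
    b = d_2 r(x,x) > 0 (r_2 is evaluated at ([L2],[L1])); the constant
    productions have zero derivatives. *)
Definition nonautI_rates (rho P : R) : 'cV[R]_4 :=
  \col_(j < 4) match val j with 0 | 1 => rho | _ => P end.

Definition nonautI_react (a b : R) : 'M[R]_(4, 2) :=
  \matrix_(j < 4, i < 2)
    match val j, val i with
    | 0, 0 => a | 0, 1 => b
    | 1, 0 => b | 1, 1 => a
    | _, _ => 0
    end.

Definition nonautI_jac (eta a b : R) : 'M[R]_2 :=
  nonautI_S eta *m nonautI_react a b.

Definition nonautI_admissible (eta P rho a b : R) : Prop :=
  [/\ 0 < rho, 0 < a, 0 < b & nonautI_S eta *m nonautI_rates rho P = 0].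

Definition nonautI_capacity (eta P : R) : Prop :=
  exists rho a b, nonautI_admissible eta P rho a b /\
                  \det (nonautI_jac eta a b) = 0.

End General.

Definition nonautI_rxn1 : 'I_4 := @Ordinal 4 0 erefl.
Definition nonautI_rxn2 : 'I_4 := @Ordinal 4 1 erefl.

(* At a homogeneous steady state the Jacobian factors as
   det G = (eta - 1)(eta + 1)(a - b)(a + b), so for eta <> 1 it is singular
   exactly when d_1 r = d_2 r.  All stoichiometric coefficients of reactions
   1 and 2 are negative, so a 2 x 2 CS-matrix on them is a non-autocatalytic
   unstable-positive feedback as soon as its determinant is negative: the
   assignment L1 -> 1, L2 -> 2 gives det = eta^2 - 1 and the crossed one
   gives 1 - eta^2, so one of them works whenever eta <> 1.  Conversely a
   non-Metzler matrix has size at least 2 while a CS triple on two species has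
   size at most 2, which pins down the motif. *)

From HB Require Import structures.
From mathcomp Require Import all_boot all_order all_algebra.
From mathcomp Require Import ring lra zify.

Set Implicit Arguments.
Unset Strict Implicit.
Unset Printing Implicit Defensive.
Import Order.TTheory GRing.Theory Num.Theory.
Local Open Scope ring_scope.

Lemma det_mx22 (R : comPzRingType) (M : 'M[R]_2) :
  \det M = M 0 0 * M 1 1 - M 0 1 * M 1 0.
Proof.
rewrite (expand_det_row _ 0) !big_ord_recl big_ord0 addr0.
rewrite /cofactor !det_mx11 !mxE /= expr0 expr1 mul1r mulN1r mulrN.
have l01 : lift 0 0 = 1 :> 'I_2 by apply: val_inj.
have l10 : lift 1 0 = 0 :> 'I_2 by apply: val_inj.
by rewrite l01 l10.
Qed.

Lemma unstable_positive_mx2 (R : realFieldType) (M : 'M[R]_2) :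
  M 0 0 < 0 -> M 1 1 < 0 -> \det M < 0 -> unstable_positive M.
Proof.
move=> M00 M11 detM; split; first by rewrite expr1 mulN1r oppr_gt0.
have diag_lt0 i : M i i < 0.
  case: i => -[|[|//]] i_lt2.
    by rewrite (_ : Ordinal i_lt2 = 0) //; apply: val_inj.
  by rewrite (_ : Ordinal i_lt2 = 1) //; apply: val_inj.
move=> A A_gt0 A_lt2; have A1 : #|A| = 1%N by lia.
rewrite /principal_minor; move: (@enum_val _ (mem A)); rewrite A1 => f.
by rewrite expr0 mul1r det_mx11 mxE lt_gtF.
Qed.

Lemma non_autocatalytic_size (R : realFieldType) k (M : 'M[R]_k) :
  non_autocatalytic M -> (1 < k)%N.
Proof.
case=> l [l' [neq_ll' _]]; move: neq_ll'; rewrite -(inj_eq val_inj) /=.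
by have := ltn_ord l; have := ltn_ord l'; lia.
Qed.

Lemma CS_triple_size n m (reac : 'I_n -> 'I_m -> bool) k
    (kappa : 'I_k -> 'I_n) (J : 'I_k -> 'I_m) :
  CS_triple reac kappa J -> (k <= n)%N.
Proof. by case=> kappa_inj _ _; have := leq_card kappa kappa_inj; rewrite !card_ord. Qed.

Section NonAutI.
Variable R : realFieldType.
Implicit Types eta P rho a b : R.

Lemma nonautI_jac_det eta a b :
  \det (nonautI_jac eta a b) = (eta - 1) * (eta + 1) * (a - b) * (a + b).
Proof. by rewrite det_mx22 /nonautI_jac !mxE !big_ord_recr !big_ord0 /= !mxE /=; ring. Qed.

Lemma nonautI_steady_state eta P rho :
  nonautI_S eta *m nonautI_rates rho P = 0 <-> P = (eta + 1) * rho.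
Proof.
split=> [/(congr1 (fun v : 'cV_2 => v 0 0)) | ->].
  by rewrite !mxE !big_ord_recr !big_ord0 /= !mxE /=; lra.
apply/matrixP => -[[|[|//]] ?] j; rewrite !mxE !big_ord_recr !big_ord0 /= !mxE /=; ring.
Qed.

Lemma nonautI_S_lt0 eta i (j : 'I_4) : 0 < eta -> (j < 2)%N -> nonautI_S eta i j < 0.
Proof.
move=> eta_gt0; rewrite mxE.
by case: i j => -[|[|//]] ? [[|[|//]] ?] _ /=; rewrite ?oppr_lt0 ?ltr01.
Qed.

Definition nonautI_rxn12 : 'I_2 -> 'I_4 := widen_ord (isT : (2 <= 4)%N).

Lemma nonautI_feedback eta (J : 'I_2 -> 'I_2) :
  0 < eta -> injective J ->
  \det (CS_matrix (nonautI_S eta) id (nonautI_rxn12 \o J)) < 0 ->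
  [/\ CS_triple nonautI_reac id (nonautI_rxn12 \o J),
      unstable_positive (CS_matrix (nonautI_S eta) id (nonautI_rxn12 \o J)) &
      non_autocatalytic (CS_matrix (nonautI_S eta) id (nonautI_rxn12 \o J))].
Proof.
move=> eta_gt0 J_inj det_lt0.
have entry_lt0 l l' : CS_matrix (nonautI_S eta) id (nonautI_rxn12 \o J) l l' < 0.
  by rewrite mxE nonautI_S_lt0 //; exact: ltn_ord (J l').
split; last by exists 0, 1.
- split=> // [x y /(congr1 val) /= /val_inj | l]; first exact: J_inj.
  exact: ltn_ord (J l).
- exact: unstable_positive_mx2.
Qed.

Lemma nonautI_motif k (kappa : 'I_k -> 'I_2) (J : 'I_k -> 'I_4) :
  (1 < k)%N -> CS_triple nonautI_reac kappa J ->
  motif_species kappa J = [set: 'I_2] /\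
  motif_reactions kappa J = [set nonautI_rxn1; nonautI_rxn2].
Proof.
move=> k_gt1 CS_J; have k2 : k = 2%N by have := CS_triple_size CS_J; lia.
subst k; case: CS_J => kappa_inj J_inj J_reac; split.
  by apply/eqP; rewrite eqEcard subsetT card_imset //= max_card.
apply/eqP; rewrite eqEcard card_imset // card_ord cards2; apply/andP; split.
  apply/subsetP => _ /imsetP [l _ ->]; have := J_reac l; rewrite /nonautI_reac !inE.
  by case: (J l) => -[|[|//]].
by case: (_ != _).
Qed.

End NonAutI.

Theorem proposition4p3 (R : realFieldType) (eta P : R) :
  0 < eta -> 0 < P -> eta != 1 ->
  [/\ (* capacity for zero-eigenvalue bifurcation *)
      nonautI_capacity eta P,
      (* bifurcation condition d_1 r = d_2 r *)
      (forall rho a b, nonautI_admissible eta P rho a b ->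
         \det (nonautI_jac eta a b) = 0 <-> a = b),
      (* a non-autocatalytic unstable-positive feedback exists, with the
         stated instability motif *)
      (exists k (kappa : 'I_k -> 'I_2) (J : 'I_k -> 'I_4),
         [/\ CS_triple nonautI_reac kappa J,
             unstable_positive (CS_matrix (nonautI_S eta) kappa J),
             non_autocatalytic (CS_matrix (nonautI_S eta) kappa J),
             motif_species kappa J = [set: 'I_2] &
             motif_reactions kappa J = [set nonautI_rxn1; nonautI_rxn2]]) &
      (* and every such feedback has this instability motif *)
      (forall k (kappa : 'I_k -> 'I_2) (J : 'I_k -> 'I_4),
         CS_triple nonautI_reac kappa J ->
         unstable_positive (CS_matrix (nonautI_S eta) kappa J) ->
         non_autocatalytic (CS_matrix (nonautI_S eta) kappa J) ->
         motif_species kappa J = [set: 'I_2] /\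
         motif_reactions kappa J = [set nonautI_rxn1; nonautI_rxn2])].
Proof.
move=> eta_gt0 P_gt0 eta_neq1; have eta1_gt0 : 0 < eta + 1 by lra.
split.
- exists (P / (eta + 1)), 1, 1; rewrite nonautI_jac_det subrr mulr0 mul0r.
  split=> //; split; rewrite ?ltr01 ?divr_gt0 //.
  by apply/nonautI_steady_state; field; rewrite lt0r_neq0.
- move=> rho a b [_ a_gt0 b_gt0 _]; rewrite nonautI_jac_det.
  split=> [|->]; last by rewrite subrr mulr0 mul0r.
  move/eqP; rewrite !mulf_eq0 !subr_eq0 (negbTE eta_neq1) (gt_eqF eta1_gt0).
  by rewrite (gt_eqF (addr_gt0 a_gt0 b_gt0)) orbF => /eqP.
- have [J J_inj det_lt0] : exists2 J : 'I_2 -> 'I_2, injective J &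
      \det (CS_matrix (nonautI_S eta) id (nonautI_rxn12 \o J)) < 0.
    case: (ltgtP eta 1) => [eta_lt1|eta_gt1|eta_eq1].
    + by exists id => //; rewrite det_mx22 !mxE /=; nra.
    + by exists (@rev_ord 2); [exact: rev_ord_inj | rewrite det_mx22 !mxE /=; nra].
    + by rewrite eta_eq1 eqxx in eta_neq1.
  have [CS_J up_J na_J] := nonautI_feedback eta_gt0 J_inj det_lt0.
  by exists 2%N, id, (nonautI_rxn12 \o J); have [] := nonautI_motif (ltnSn 1) CS_J.
- move=> k kappa J CS_J _ /non_autocatalytic_size k_gt1.
  exact: nonautI_motif.
Qed.
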